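(* Let $d>1$ be an integer, let $q$ be a square power of an odd prime $p$ with $q \equiv 1 \pmod{2d}$, and let $\chi$ be a multiplicative character of $\mathbb{F}_q$ of order $d$. If the clique number of $GP(q,d)$ is $\sqrt{q}$, then the Gauss sum $G(\chi^j)$ is pure for every positive integer $j$.
   Context: $GP(q,d)$ is the graph on $\mathbb{F}_q$ in which distinct $x,y$ are adjacent iff $x-y$ is a $d$-th power in $\mathbb{F}_q^*$. For a multiplicative character $\chi$ (with $\chi(0)=0$ when $\chi$ is nontrivial, and the trivial character $\chi_0$ taking value $1$ on $\mathbb{F}_q^*$), $G(\chi)=\sum_{c\in\mathbb{F}_q}\chi(c)e_p(\operatorname{Tr}(c))$, where $\operatorname{Tr}$ is the absolute trace to $\mathbb{F}_p$ and $e_p(x)=e^{2\pi i x/p}$. A Gauss sum is pure if some nonzero integral power of it is a real number (in particular $G(\chi_0)=0$ counts as pure). *)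

From HB Require Import structures.
From mathcomp Require Import all_boot all_order all_algebra all_field.
From mathcomp Require Import complex.
From mathcomp Require Import reals trigo.
Set Implicit Arguments. Unset Strict Implicit. Unset Printing Implicit Defensive.
Import Order.TTheory GRing.Theory Num.Theory.
Local Open Scope ring_scope.
Local Open Scope complex_scope.

Definition gp_adj (F : finFieldType) (d : nat) (x y : F) : bool :=
  (x != y) && [exists z : F, (z != 0) && (x - y == z ^+ d)].

Definition gp_clique (F : finFieldType) (d : nat) (S : {set F}) : bool :=
  [forall x in S, forall y in S, (x != y) ==> gp_adj d x y].

Definition gp_clique_number (F : finFieldType) (d : nat) : nat :=
  \max_(S : {set F} | gp_clique d S) #|S|.

Definition abs_trace (F : finFieldType) (p : nat) (c : F) : F :=
  \sum_(i < logn p #|F|) c ^+ (p ^ i).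

(** Representative in {0,...,p-1} of the trace (an element of the prime field). *)
Definition trace_nat (F : finFieldType) (p : nat) (c : F) : nat :=
  if [pick k : 'I_p | (k%:R : F) == abs_trace p c] is Some k then val k else 0%N.

Definition zeta_p (R : realType) (p : nat) : R[i] :=
  (cos (2 * pi / p%:R)) +i* (sin (2 * pi / p%:R)).

Definition add_char (R : realType) (F : finFieldType) (p : nat) (c : F) : R[i] :=
  zeta_p R p ^+ trace_nat p c.

(** A multiplicative character of F, i.e. a homomorphism F^* -> C^*
    (only its values on F^* matter; the value at 0 is fixed by convention below). *)
Definition is_mult_char (R : realType) (F : finFieldType) (chi : F -> R[i]) : Prop :=
  (forall x y : F, x != 0 -> y != 0 -> chi (x * y) = chi x * chi y) /\
  (forall x : F, x != 0 -> chi x != 0).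

Definition char_trivial (R : realType) (F : finFieldType) (chi : F -> R[i]) : bool :=
  [forall x : F, (x != 0) ==> (chi x == 1)].

(** chi^j, with the convention chi^j(0) = 0 if chi^j is nontrivial and
    chi^j(0) = 1 (= chi_0(0)) if chi^j is the trivial character chi_0. *)
Definition char_pow (R : realType) (F : finFieldType) (chi : F -> R[i]) (j : nat)
  : F -> R[i] :=
  fun x => if x == 0 then (if char_trivial (fun y => chi y ^+ j) then 1 else 0)
           else chi x ^+ j.

Definition char_order (R : realType) (F : finFieldType) (chi : F -> R[i]) (d : nat) : Prop :=
  (0 < d)%N /\ char_trivial (fun y => chi y ^+ d) /\
  (forall m : nat, (0 < m)%N -> (m < d)%N -> ~~ char_trivial (fun y => chi y ^+ m)).

Definition gauss_sum (R : realType) (F : finFieldType) (p : nat) (chi : F -> R[i]) : R[i] :=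
  \sum_(c : F) chi c * add_char R p c.

Definition pure (R : realType) (z : R[i]) : Prop :=
  exists m : int, m != 0 /\ (z ^ m) \is Num.real.

From HB Require Import structures.
From mathcomp Require Import all_boot all_order all_algebra all_field.
From mathcomp Require Import complex.
From mathcomp Require Import reals trigo.
From mathcomp Require Import abelian ring.
Import Order.TTheory GRing.Theory Num.Theory.
Set Implicit Arguments. Unset Strict Implicit. Unset Printing Implicit Defensive.
Local Open Scope ring_scope.
Local Open Scope complex_scope.

(* Translating a maximum clique gives a set C containing 0 with |C| = sqrt q and
   chi (x - y) = 1 for distinct x, y in C.  If chi a <> 1, then (x, y) |-> x + a y
   is injective on C x C, hence onto F, so the sums S b = \sum_(c in C) psi (b c)
   of the additive character psi satisfy S b * S (a b) = 0 for b <> 0: chi is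
   constant, say chi b0, on the nonzero support of S.  Evaluating
   \sum_b chi^j b * S b once through this support and once through the
   substitution b |-> b / c gives
   chi b0 ^ j * (q - sqrt q) = (sqrt q - 1) * G (chi^j),
   so G (chi^j) = chi b0 ^ j * sqrt q, whose d-th power is real. *)

Lemma natr_eq_modn (R : nzRingType) (p m n : nat) : p \in [pchar R] ->
  m%:R = n%:R :> R -> m = n %[mod p].
Proof.
move=> pcharRp; wlog le_mn : m n / (m <= n)%N => [le_wlog|].
  by case: (leqP m n) => [|/ltnW] /le_wlog // eq_mn; last symmetry; apply: eq_mn.
move=> eq_mn; apply/eqP; rewrite eq_sym eqn_mod_dvd // (dvdn_pcharf pcharRp).
by rewrite natrB // eq_mn subrr.
Qed.

Lemma frobenius_fixed_natr (R : idomainType) (p : nat) (t : R) :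
  p \in [pchar R] -> t ^+ p = t -> exists k : 'I_p, k%:R = t.
Proof.
move=> pcharRp tp; have p_gt1 := prime_gt1 (pcharf_prime pcharRp).
suff /existsP [k /eqP] : [exists k : 'I_p, k%:R == t] by exists k.
apply: contraT => /existsPn t_notin.
pose P : {poly R} := 'X^p - 'X.
have size_P : size P = p.+1.
  by rewrite size_polyDl ?size_polyXn // size_polyN size_polyX ltnS.
have rootP u : u ^+ p = u -> root P u by move=> up; rewrite /root !hornerE up subrr.
pose roots := t :: [seq (val k)%:R | k <- enum 'I_p].
have := @max_poly_roots _ P roots; rewrite -size_poly_eq0 size_P /=.
rewrite size_map size_enum_ord ltnn; apply => //.
  rewrite /= rootP //=; apply/allP => _ /mapP [k _ ->].
  by apply: rootP; rewrite -(pFrobenius_autE pcharRp) pFrobenius_aut_nat.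
rewrite /= map_inj_uniq ?enum_uniq ?andbT.
  by apply/mapP => -[k _ tk]; move: (t_notin k); rewrite tk eqxx.
move=> k l /(natr_eq_modn pcharRp); rewrite !modn_small //; exact: val_inj.
Qed.

Section AbsoluteTrace.
Variables (F : finFieldType) (p : nat).
Hypothesis pcharFp : p \in [pchar F].

Lemma card_finField_pchar : #|F| = (p ^ logn p #|F|)%N.
Proof.
have /p_natP [n card_n] : p.-nat #|[set: F]|.
  exact/abelem_pgroup/fin_ring_pchar_abelem.
by rewrite -cardsT card_n pfactorK ?(pcharf_prime pcharFp).
Qed.

Lemma abs_traceD : {morph @abs_trace F p : x y / x + y}.
Proof.
move=> x y; rewrite /abs_trace -big_split; apply: eq_bigr => i _.
rewrite exprDn_pchar // (eq_pnat _ (pcharf_eq pcharFp)) pnatX pnat_id //.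
exact: pcharf_prime pcharFp.
Qed.

Lemma abs_trace_frobenius (x : F) : abs_trace p x ^+ p = abs_trace p x.
Proof.
rewrite -(pFrobenius_autE pcharFp) /abs_trace rmorph_sum /=.
under eq_bigr do rewrite pFrobenius_autE -exprM -expnSr.
set n := logn p #|F|.
have x_pn : x ^+ (p ^ n) = x by rewrite -card_finField_pchar expf_card.
have sum_recl : \sum_(i < n.+1) x ^+ (p ^ i) = x + \sum_(i < n) x ^+ (p ^ i.+1).
  by rewrite big_ord_recl expn0 expr1.
have sum_recr : \sum_(i < n.+1) x ^+ (p ^ i) = \sum_(i < n) x ^+ (p ^ i) + x.
  by rewrite big_ord_recr /= x_pn.
by apply: (@addrI _ x); rewrite -sum_recl sum_recr addrC.
Qed.

Lemma trace_natE (x : F) : (trace_nat p x)%:R = abs_trace p x.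
Proof.
rewrite /trace_nat; case: pickP => [k /eqP // | no_k].
have [k k_tr] := frobenius_fixed_natr pcharFp (abs_trace_frobenius x).
by move: (no_k k); rewrite k_tr eqxx.
Qed.

Lemma trace_natD (x y : F) :
  trace_nat p (x + y) = (trace_nat p x + trace_nat p y)%N %[mod p].
Proof. by apply: (natr_eq_modn pcharFp); rewrite natrD !trace_natE abs_traceD. Qed.

End AbsoluteTrace.

Lemma semi_invariant_sum_eq0 (K : fieldType) (I : finType) (f : I -> K)
    (h : I -> I) (c : K) :
  injective h -> (forall i, f (h i) = c * f i) -> c != 1 -> \sum_i f i = 0.
Proof.
move=> h_inj f_h c_neq1; have : (1 - c) * \sum_i f i = 0.
  rewrite mulrBl mul1r mulr_sumr {1}(reindex_inj h_inj) /=.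
  by under eq_bigr do rewrite f_h; rewrite subrr.
by move/eqP; rewrite mulf_eq0 subr_eq0 eq_sym (negbTE c_neq1) => /eqP.
Qed.

Section CharacterSums.
Variables (K : fieldType) (F : finFieldType).

Lemma sum_add_char_eq0 (psi : F -> K) (y0 : F) :
  {morph psi : x y / x + y >-> x * y} -> psi y0 != 1 -> \sum_x psi x = 0.
Proof.
move=> psiD; apply: (semi_invariant_sum_eq0 (addIr y0)) => x.
by rewrite psiD mulrC.
Qed.

Lemma sum_add_char_scale (psi : F -> K) (y0 b : F) :
  {morph psi : x y / x + y >-> x * y} -> psi 0 = 1 -> psi y0 != 1 ->
  \sum_x psi (b * x) = if b == 0 then #|F|%:R else 0.
Proof.
move=> psiD psi0 psi_y0; have [-> | b_neq0] := eqVneq b 0.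
  by under eq_bigr do rewrite mul0r psi0; rewrite sumr_const.
by have := sum_add_char_eq0 psiD psi_y0; rewrite (reindex_inj (mulfI b_neq0)).
Qed.

Lemma sum_mult_char_eq0 (cp : F -> K) (a : F) :
  {morph cp : x y / x * y} -> a != 0 -> cp a != 1 -> \sum_x cp x = 0.
Proof. by move=> cpM a_neq0; apply: (semi_invariant_sum_eq0 (mulfI a_neq0) (cpM a)). Qed.

End CharacterSums.

Section AdditiveCharacter.
Variable R : realType.

Lemma zeta_p_expn (p n : nat) :
  zeta_p R p ^+ n = cos ((2 * pi / p%:R) *+ n) +i* sin ((2 * pi / p%:R) *+ n).
Proof.
elim: n => [|n IHn]; first by rewrite expr0 !mulr0n cos0 sin0.
rewrite exprS IHn /zeta_p; set a := 2 * pi / p%:R.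
by apply/eqP; rewrite mulrS cosD sinD eq_complex /= [sin a * _ + _]addrC !eqxx.
Qed.

Lemma zeta_p_expp (p : nat) : (0 < p)%N -> zeta_p R p ^+ p = 1.
Proof.
move=> p_gt0; rewrite zeta_p_expn -mulr_natr mulfVK ?pnatr_eq0 -?lt0n //.
by rewrite -[2 * pi]add0r mulr_natl cosD2pi sinD2pi cos0 sin0.
Qed.

Variables (F : finFieldType) (p : nat).
Hypothesis pcharFp : p \in [pchar F].

Lemma add_charD : {morph @add_char R F p : x y / x + y >-> x * y}.
Proof.
have p_gt0 := prime_gt0 (pcharf_prime pcharFp).
move=> x y; rewrite /add_char -exprD -(expr_mod _ (zeta_p_expp p_gt0)).
by rewrite (trace_natD pcharFp) expr_mod // zeta_p_expp.
Qed.

Lemma add_char0 : add_char R p (0 : F) = 1.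
Proof.
have zeta_neq0 : zeta_p R p != 0.
  apply: contra_eq_neq (zeta_p_expp (prime_gt0 (pcharf_prime pcharFp))) => ->.
  by rewrite expr0n gtn_eqF ?prime_gt0 ?(pcharf_prime pcharFp) // eq_sym oner_eq0.
apply: (mulfI (expf_neq0 (trace_nat p (0 : F)) zeta_neq0)).
by rewrite -add_charD addr0 mulr1.
Qed.

Lemma sum_add_char_real : \sum_(x : F) add_char R p x \is Num.real.
Proof.
have [/existsP [y0 psi_y0] | /existsPn psi1] := boolP [exists y : F, add_char R p y != 1].
  by rewrite (sum_add_char_eq0 add_charD psi_y0) real0.
by under eq_bigr do rewrite (eqP (negbNE (psi1 _))); rewrite sumr_const realn.
Qed.

End AdditiveCharacter.

Section PaleyCliques.
Variables (F : finFieldType) (d : nat).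

Lemma gp_adj_translate (a x y : F) : gp_adj d (x + a) (y + a) = gp_adj d x y.
Proof. by rewrite /gp_adj (inj_eq (addIr a)) opprD addrACA subrr addr0. Qed.

Lemma gp_clique_translate (S : {set F}) (a : F) :
  gp_clique d S -> gp_clique d [set x + a | x in S].
Proof.
move=> /forall_inP S_clique; apply/forall_inP => _ /imsetP [x xS ->].
apply/forall_inP => _ /imsetP [y yS ->].
by rewrite gp_adj_translate (inj_eq (addIr a)); exact: (forall_inP (S_clique x xS)).
Qed.

Lemma exists_max_gp_clique0 :
  exists C : {set F}, [/\ 0 \in C, gp_clique d C & #|C| = gp_clique_number F d].
Proof.
have clique1 : [set 0 : F] \in gp_clique d.
  by apply/forall_inP => x /set1P ->; apply/forall_inP => y /set1P ->; rewrite eqxx.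
have clique_pos : (0 < #|@gp_clique F d|)%N by apply/card_gt0P; exists [set 0].
have [S S_clique card_S] := eq_bigmax_cond (fun S : {set F} => #|S|) clique_pos.
have [c0 c0S] : exists c0, c0 \in S.
  apply/card_gt0P; rewrite -card_S -(cards1 (0 : F)); exact: leq_bigmax_cond.
exists [set x - c0 | x in S]; split.
- by apply/imsetP; exists c0; rewrite ?subrr.
- exact: gp_clique_translate.
- by rewrite card_imset; [exact: esym card_S | exact: addIr].
Qed.

End PaleyCliques.

Section MultiplicativeCharacter.
Variables (K : fieldType) (F : finFieldType) (chi : F -> K).
Hypotheses (chiM : forall x y : F, x != 0 -> y != 0 -> chi (x * y) = chi x * chi y)
           (chi_neq0 : forall x : F, x != 0 -> chi x != 0).

Lemma mult_char1 : chi 1 = 1.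
Proof.
apply: (mulfI (chi_neq0 (oner_neq0 F))).
by rewrite -chiM ?oner_neq0 // !mulr1.
Qed.

Lemma mult_charX (x : F) (n : nat) : x != 0 -> chi (x ^+ n) = chi x ^+ n.
Proof.
move=> x_neq0; elim: n => [|n IHn]; first by rewrite !expr0 mult_char1.
by rewrite !exprS chiM ?IHn ?expf_neq0.
Qed.

Lemma mult_char_powM (cp : F -> K) (j : nat) :
  cp 0 = 0 -> (forall x, x != 0 -> cp x = chi x ^+ j) -> {morph cp : x y / x * y}.
Proof.
move=> cp0 cp_chi x y.
have [-> | x_neq0] := eqVneq x 0; first by rewrite mul0r cp0 mul0r.
have [-> | y_neq0] := eqVneq y 0; first by rewrite mulr0 cp0 mulr0.
by rewrite !cp_chi ?mulf_neq0 // chiM // exprMn.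
Qed.

Lemma gp_clique_mult_char_diff (d : nat) (C : {set F}) :
  (forall x, x != 0 -> chi x ^+ d = 1) -> gp_clique d C ->
  {in C &, forall x y, x != y -> chi (x - y) = 1}.
Proof.
move=> chi_d /forall_inP C_clique x y xC yC x_neq_y.
have := implyP (forall_inP (C_clique x xC) y yC) x_neq_y.
case/andP=> _ /existsP [z /andP [z_neq0 /eqP ->]].
by rewrite mult_charX // chi_d.
Qed.

End MultiplicativeCharacter.

Section CliqueCharacterSums.
Variables (K : numFieldType) (F : finFieldType) (psi chi : F -> K).
Variables (C : {set F}) (y0 : F).
Hypotheses (psiD : {morph psi : x y / x + y >-> x * y}) (psi0 : psi 0 = 1)
           (psi_y0 : psi y0 != 1).
Hypothesis chiM : forall x y : F, x != 0 -> y != 0 -> chi (x * y) = chi x * chi y.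
Hypotheses (C0 : 0 \in C) (C_diff : {in C &, forall x y, x != y -> chi (x - y) = 1})
           (card_C : (#|C| ^ 2)%N = #|F|).

Definition char_sum (b : F) : K := \sum_(c in C) psi (b * c).

Lemma sumset_injective (a : F) : a != 0 -> chi a != 1 ->
  {in setX C C &, injective (fun u : F * F => u.1 + a * u.2)}.
Proof.
move=> a_neq0 chi_a [x1 x2] [y1 y2] /setXP [x1C x2C] /setXP [y1C y2C] /= eq_xy.
have [eq2 | neq2] := eqVneq x2 y2; first by move: eq_xy; rewrite eq2 => /addIr ->.
(* Now a = (x1 - y1) / (y2 - x2) is a quotient of differences of C, where chi is 1. *)
have diff1 : x1 - y1 = a * (y2 - x2).
  by rewrite -[x1](addrK (a * x2)) eq_xy; ring.
have neq1 : x1 != y1.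
  by rewrite -subr_eq0 diff1 mulf_eq0 (negbTE a_neq0) subr_eq0 eq_sym.
have chi_diff2 : chi (y2 - x2) = 1 by apply: C_diff; rewrite // eq_sym.
have y2x2_neq0 : y2 - x2 != 0 by rewrite subr_eq0 eq_sym.
have := C_diff x1C y1C neq1; rewrite diff1 chiM // chi_diff2 mulr1 => chi_a1.
by rewrite chi_a1 eqxx in chi_a.
Qed.

Lemma sumset_eq_setT (a : F) : a != 0 -> chi a != 1 ->
  [set u.1 + a * u.2 | u in setX C C] = setT.
Proof.
move=> a_neq0 chi_a; apply/eqP; rewrite eqEcard subsetT cardsT.
by rewrite card_in_imset ?cardsX ?mulnn ?card_C ?leqnn //; exact: sumset_injective.
Qed.

Lemma char_sum_mul_eq0 (a b : F) : a != 0 -> chi a != 1 -> b != 0 ->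
  char_sum b * char_sum (a * b) = 0.
Proof.
move=> a_neq0 chi_a b_neq0.
have := sum_add_char_scale b psiD psi0 psi_y0; rewrite (negbTE b_neq0) => <-.
rewrite (eq_bigl [in [set u.1 + a * u.2 | u in setX C C]]) => [|x]; last first.
  by rewrite sumset_eq_setT ?inE.
rewrite big_imset /=; last exact: sumset_injective.
rewrite /char_sum big_distrl /=; under eq_bigr do rewrite big_distrr /=.
rewrite pair_big_dep /=; apply: eq_big => [[x1 x2] | [x1 x2] _] /=.
  by rewrite in_setX.
by rewrite mulrDr psiD mulrCA mulrA.
Qed.

Lemma char_sum_support (b b' : F) : b != 0 -> b' != 0 ->
  char_sum b != 0 -> char_sum b' != 0 -> chi b' = chi b.
Proof.
move=> b_neq0 b'_neq0 Sb_neq0 Sb'_neq0; set a := b' / b.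
have a_neq0 : a != 0 by rewrite mulf_neq0 ?invr_eq0.
have ab : a * b = b' by rewrite divfK.
have [chi_a | chi_a] := eqVneq (chi a) 1; first by rewrite -ab chiM // chi_a mul1r.
have /eqP := char_sum_mul_eq0 a_neq0 chi_a b_neq0.
by rewrite ab mulf_eq0 (negbTE Sb_neq0) (negbTE Sb'_neq0).
Qed.

Lemma char_sum0 : char_sum 0 = #|C|%:R.
Proof. by rewrite /char_sum; under eq_bigr do rewrite mul0r psi0; rewrite sumr_const. Qed.

Lemma sum_char_sum : \sum_b char_sum b = #|F|%:R.
Proof.
have sum_psi_mul c : \sum_b psi (b * c) = \sum_b psi (c * b).
  by apply: eq_bigr => b _; rewrite mulrC.
rewrite /char_sum exchange_big /= (bigD1 0) //= sum_psi_mul.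
rewrite (sum_add_char_scale _ psiD psi0 psi_y0) eqxx [X in _ + X]big1 ?addr0 //.
move=> c /andP [_ c_neq0].
by rewrite sum_psi_mul (sum_add_char_scale _ psiD psi0 psi_y0) (negbTE c_neq0).
Qed.

Lemma card_C_gt1 : (1 < #|C|)%N.
Proof. by rewrite -(ltn_exp2r _ _ (isT : 0 < 2)%N) card_C finNzRing_gt1. Qed.

Lemma exists_char_sum_neq0 : exists2 b, b != 0 & char_sum b != 0.
Proof.
apply/exists_inP; apply: contraT => /exists_inPn Sb_eq0.
have : \sum_b char_sum b = char_sum 0.
  by rewrite (bigD1 0) //= big1 ?addr0 // => b /Sb_eq0 /negbNE /eqP.
rewrite sum_char_sum char_sum0 -card_C => /eqP; rewrite eqr_nat.
by rewrite -[X in _ == X]expn1 eqn_exp2l // card_C_gt1.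
Qed.

Lemma weighted_char_sum_gauss (cp : F -> K) :
    {morph cp : x y / x * y} -> \sum_x cp x = 0 ->
    {in C, forall c, c != 0 -> cp c = 1} ->
  \sum_b cp b * char_sum b = (#|C|%:R - 1) * \sum_x cp x * psi x.
Proof.
move=> cpM sum_cp cp_C; set G := \sum_x cp x * psi x.
have inner c : c \in C -> \sum_b cp b * psi (b * c) = G - (c == 0)%:R * G.
  move=> cC; have [-> | c_neq0] := eqVneq c 0.
    by rewrite mul1r subrr; under eq_bigr do rewrite mulr0 psi0 mulr1.
  rewrite mul0r subr0 (reindex_inj (mulIf (invr_neq0 c_neq0))) /=.
  apply: eq_bigr => x _; rewrite mulfVK //.
  congr (_ * _); rewrite -[in RHS](divfK c_neq0 x) [in RHS]cpM.
  by rewrite (cp_C c cC c_neq0) mulr1.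
rewrite /char_sum; under eq_bigr do rewrite mulr_sumr.
rewrite exchange_big /= (eq_bigr _ inner) sumrB sumr_const (bigD1 0) //= eqxx.
rewrite big1 => [|c /andP [_ c_neq0]]; last by rewrite (negbTE c_neq0) mul0r.
by rewrite addr0 mul1r mulrBl mul1r mulr_natl.
Qed.

Lemma weighted_char_sum_support (cp : F -> K) (w : K) :
    cp 0 = 0 -> (forall b, b != 0 -> char_sum b != 0 -> cp b = w) ->
  \sum_b cp b * char_sum b = w * (#|F|%:R - #|C|%:R).
Proof.
move=> cp0 cp_w; have -> : #|F|%:R - #|C|%:R = \sum_(b | b != 0) char_sum b.
  by rewrite -sum_char_sum -char_sum0 (bigD1 0) //= addrAC subrr add0r.
rewrite (bigD1 0) //= cp0 mul0r add0r mulr_sumr; apply: eq_bigr => b b_neq0.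
by have [-> | /(cp_w b b_neq0) ->] := eqVneq (char_sum b) 0; rewrite ?mulr0.
Qed.

Theorem gauss_sum_clique (cp : F -> K) (j : nat) :
    cp 0 = 0 -> (forall x, x != 0 -> cp x = chi x ^+ j) -> \sum_x cp x = 0 ->
  exists2 b0, b0 != 0 & \sum_x cp x * psi x = chi b0 ^+ j * #|C|%:R.
Proof.
move=> cp0 cp_chi sum_cp.
have cp_C : {in C, forall c, c != 0 -> cp c = 1}.
  by move=> c cC c_neq0; rewrite cp_chi // -[c]subr0 C_diff // expr1n.
have [b0 b0_neq0 Sb0_neq0] := exists_char_sum_neq0; exists b0 => //.
have := weighted_char_sum_gauss (mult_char_powM chiM cp0 cp_chi) sum_cp cp_C.
rewrite (weighted_char_sum_support (w := chi b0 ^+ j) cp0); last first.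
  by move=> b b_neq0 Sb_neq0; rewrite cp_chi // (char_sum_support b0_neq0).
have C1_neq0 : (#|C|%:R - 1 : K) != 0.
  by rewrite subr_eq0 pnatr_eq1 neq_ltn card_C_gt1 orbT.
by move=> eq_G; apply: (mulfI C1_neq0); rewrite -eq_G -card_C natrX; ring.
Qed.

End CliqueCharacterSums.

Section CharacterPower.
Variables (R : realType) (F : finFieldType) (chi : F -> R[i]) (j : nat).

Lemma char_trivialP (f : F -> R[i]) :
  reflect (forall x, x != 0 -> f x = 1) (char_trivial f).
Proof.
apply: (iffP forallP) => [f1 x x_neq0 | f1 x]; last by apply/implyP => /f1 ->.
exact/eqP/(implyP (f1 x)).
Qed.

Lemma char_pow_trivial (x : F) :
  char_trivial (fun y => chi y ^+ j) -> char_pow chi j x = 1.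
Proof.
move=> triv; rewrite /char_pow triv; case: eqP => // /eqP.
by move: triv => /char_trivialP; apply.
Qed.

Lemma char_powE (x : F) : x != 0 -> char_pow chi j x = chi x ^+ j.
Proof. by rewrite /char_pow => /negbTE ->. Qed.

Hypothesis chiP : is_mult_char chi.
Hypothesis chi_j : ~~ char_trivial (fun y => chi y ^+ j).

Lemma char_pow0 : char_pow chi j 0 = 0.
Proof. by rewrite /char_pow eqxx (negbTE chi_j). Qed.

Lemma sum_char_pow_eq0 : \sum_x char_pow chi j x = 0.
Proof.
have [a a_neq0 chi_a] : exists2 a : F, a != 0 & chi a ^+ j != 1.
  apply/exists_inP; apply: contraNT chi_j => /exists_inPn chi_a.
  by apply/char_trivialP => x /chi_a /negbNE /eqP.
have [chiM _] := chiP.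
apply: (sum_mult_char_eq0 (mult_char_powM chiM char_pow0 char_powE) a_neq0).
by rewrite char_powE.
Qed.

End CharacterPower.

Lemma pure_of_expr (R : realType) (z : R[i]) (n : nat) :
  (0 < n)%N -> z ^+ n \is Num.real -> pure z.
Proof. by move=> n_gt0 z_n; exists n; rewrite -exprnP eqz_nat -lt0n. Qed.

Lemma pure_real (R : realType) (z : R[i]) : z \is Num.real -> pure z.
Proof. by move=> z_real; apply: (pure_of_expr (isT : 0 < 1)%N); rewrite expr1. Qed.

Theorem proposition3p6 (R : realType) (F : finFieldType) (p d r : nat)
  (chi : F -> R[i]) :
  (1 < d)%N ->
  prime p -> odd p -> p \in [pchar F] ->
  #|F| = (r ^ 2)%N ->
  (#|F| %% (2 * d) = 1)%N ->
  is_mult_char chi -> char_order chi d ->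
  gp_clique_number F d = r ->
  forall j : nat, (0 < j)%N -> pure (gauss_sum p (char_pow chi j)).
Proof.
move=> _ _ _ pcharFp card_F _ chiP [d_gt0 [/char_trivialP chi_d _]] omega j _.
rewrite /gauss_sum; have [triv | nontriv] := boolP (char_trivial (fun y => chi y ^+ j)).
  apply: pure_real; under eq_bigr do rewrite char_pow_trivial // mul1r.
  exact: sum_add_char_real.
(* The additive character is in fact nontrivial, but that case costs nothing. *)
have [/existsP [y0 psi_y0] | /existsPn psi1] := boolP [exists y : F, add_char R p y != 1];
  last first.
  apply: pure_real; under eq_bigr do rewrite (eqP (negbNE (psi1 _))) mulr1.
  by rewrite sum_char_pow_eq0 ?real0.
have [chiM chi_neq0] := chiP.
have [C [C0 C_clique card_C]] := exists_max_gp_clique0 F d.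
have C_diff := gp_clique_mult_char_diff chiM chi_neq0 chi_d C_clique.
have card_C2 : (#|C| ^ 2)%N = #|F| by rewrite card_C omega card_F.
have [b0 b0_neq0 ->] :=
  gauss_sum_clique (add_charD R pcharFp) (add_char0 R pcharFp) psi_y0 chiM C0 C_diff
    card_C2 (char_pow0 nontriv) (@char_powE _ _ chi j) (sum_char_pow_eq0 chiP nontriv).
apply: (pure_of_expr d_gt0).
by rewrite exprMn -exprM mulnC exprM chi_d // expr1n mul1r rpredX ?realn.
Qed.
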